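(* Let $d\ge2$, $q\ge2$ even, $\boldsymbol\theta\in\mathbb{R}^d$, and let $\mathbf a_1,\mathbf a_2\in\mathbb{R}^d$ be linearly independent. Then for every symmetric positive definite $d\times d$ matrix $\mathrm Q$, the (constant) vector $\nabla(\nabla^\top\mathrm Q\nabla)^{q/2}\big[(\mathbf a_1^\top(\mathbf x-\boldsymbol\theta))^q(\mathbf a_2^\top(\mathbf x-\boldsymbol\theta))\big]$ is non-zero.
   Context: $\nabla$ is the gradient with respect to $\mathbf x\in\mathbb{R}^d$; $(\nabla^\top\mathrm Q\nabla)^{q/2}$ is the $q/2$-fold application of the second-order differential operator $\nabla^\top\mathrm Q\nabla$. *)

(* real field R : realType (mathcomp-analysis reals),
   multivariate polynomials from multinomials; derivatives are formal
   partial derivatives of polynomials (mderiv), which coincide with the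
   analytic ones on polynomial functions. *)
From HB Require Import structures.
From mathcomp Require Import all_boot all_order all_algebra.
From mathcomp Require Import reals.
From mathcomp Require Import mpoly.
Set Implicit Arguments. Unset Strict Implicit. Unset Printing Implicit Defensive.
Import Order.TTheory GRing.Theory Num.Theory.
Local Open Scope ring_scope.

Definition sym_posdef (R : realFieldType) (d : nat) (Q : 'M[R]_d) : Prop :=
  Q^T = Q /\ forall v : 'rV[R]_d, v != 0 -> 0 < (v *m Q *m v^T) 0 0.

Definition lin_form (R : realFieldType) (d : nat) (a theta : 'rV[R]_d)
  : {mpoly R[d]} :=
  \sum_(i < d) a 0 i *: ('X_i - (theta 0 i)%:MP).

Definition QLap (R : realFieldType) (d : nat) (Q : 'M[R]_d)
  (p : {mpoly R[d]}) : {mpoly R[d]} :=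
  \sum_(i < d) \sum_(j < d) Q i j *: mderiv i (mderiv j p).

Definition mgrad (R : realFieldType) (d : nat) (p : {mpoly R[d]})
  : 'rV[{mpoly R[d]}]_d :=
  \row_(i < d) mderiv i p.

From HB Require Import structures.
From mathcomp Require Import all_boot all_order all_algebra.
From mathcomp Require Import reals.
From mathcomp Require Import mpoly.
From mathcomp Require Import ring.
Set Implicit Arguments. Unset Strict Implicit. Unset Printing Implicit Defensive.
Import Order.TTheory GRing.Theory Num.Theory.
Local Open Scope ring_scope.

(* Write L1, L2 for the affine forms a1^T (x - theta), a2^T (x - theta); their
   gradients are the constants a1, a2.  The polynomials
   [mixed_pow n A B] = A L1^n L2 + B L1^(n+1)
   form a family stable under every partial derivative, and nabla^T Q nabla
   sends the member of index n + 2 to the member of index n whose coefficient A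
   is multiplied by (n + 2)(n + 1) a1^T Q a1, which is nonzero for Q positive
   definite.  Starting from L1^q L2 (A = 1, B = 0), after q/2 steps we reach
   A L2 + B L1 with A <> 0, whose gradient A a2 + B a1 does not vanish because
   a1 and a2 are linearly independent. *)

Lemma free2_lincomb_eq0 (K : fieldType) (vT : vectType K) (u v : vT) (a b : K) :
  free [:: u; v] -> a *: u + b *: v = 0 -> a = 0 /\ b = 0.
Proof.
move=> free_uv abuv0.
have /freeP/(_ (fun i => [:: a; b]`_i)) coef0 : free (in_tuple [:: u; v]) by [].
rewrite !big_ord_recl big_ord0 addr0 /= in coef0.
by split; [exact: (coef0 abuv0 ord0) | exact: (coef0 abuv0 (lift ord0 ord0))].
Qed.

Lemma mxform_sumE (R : comPzRingType) (d : nat) (Q : 'M[R]_d) (u v : 'rV[R]_d) :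
  (u *m Q *m v^T) 0 0 = \sum_(i < d) \sum_(j < d) Q i j * (u 0 i * v 0 j).
Proof.
rewrite !mxE; under eq_bigr do rewrite !mxE mulr_suml.
by rewrite exchange_big; apply: eq_bigr => i _; apply: eq_bigr => j _; ring.
Qed.

Lemma mderivXE (R : nzRingType) (n : nat) (i j : 'I_n) :
  mderiv i ('X_j : {mpoly R[n]}) = (j == i)%:R.
Proof.
rewrite mderivX mnm1E; case: eqP => [->|_]; last by rewrite scale0r.
have -> : (U_(i) - U_(i) = 0)%MM by apply/mnmP => k; rewrite mnmBE mnm0E subnn.
by rewrite mpolyX0 scale1r.
Qed.

Lemma mderiv_lin_form (R : realFieldType) (d : nat) (a theta : 'rV[R]_d) i :
  mderiv i (lin_form a theta) = (a 0 i)%:MP.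
Proof.
rewrite /lin_form raddf_sum (bigD1 i) //= big1 ?addr0 => [|j /negPf ji].
  by rewrite mderivZ mderivB mderivC subr0 mderivXE eqxx -mul_mpolyC mulr1.
by rewrite mderivZ mderivB mderivC subr0 mderivXE ji scaler0.
Qed.

Section ConstantGradients.
Variables (R : realFieldType) (d : nat) (L1 L2 : {mpoly R[d]}) (c1 c2 : 'rV[R]_d).
Hypotheses (dL1 : forall i, mderiv i L1 = (c1 0 i)%:MP)
           (dL2 : forall i, mderiv i L2 = (c2 0 i)%:MP).

Lemma mderiv_pow i n : mderiv i (L1 ^+ n.+1) = (n.+1%:R * c1 0 i)%:MP * L1 ^+ n.
Proof.
elim: n => [|n IHn]; first by rewrite expr1 dL1 expr0 mulr1 mul1r.
by rewrite exprS mderivM IHn dL1 exprS; ring.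
Qed.

Definition mixed_pow n (A B : R) : {mpoly R[d]} :=
  A%:MP * (L1 ^+ n * L2) + B%:MP * L1 ^+ n.+1.

Lemma mixed_powZ n c A B : c *: mixed_pow n A B = mixed_pow n (c * A) (c * B).
Proof. by rewrite /mixed_pow -mul_mpolyC !rmorphM /=; ring. Qed.

Lemma mixed_pow_sum (I : Type) (r : seq I) (P : pred I) n (A B : I -> R) :
  \sum_(k <- r | P k) mixed_pow n (A k) (B k) =
  mixed_pow n (\sum_(k <- r | P k) A k) (\sum_(k <- r | P k) B k).
Proof. by rewrite /mixed_pow big_split /= -!mulr_suml -!rmorph_sum. Qed.

Lemma mderiv_mixed_pow i n A B :
  mderiv i (mixed_pow n.+1 A B) =
  mixed_pow n (A * n.+1%:R * c1 0 i) (A * c2 0 i + B * n.+2%:R * c1 0 i).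
Proof.
rewrite /mixed_pow mderivD !mderiv_mulC mderivM !mderiv_pow dL2 !rmorphD !rmorphM /=.
ring.
Qed.

Variable Q : 'M[R]_d.

Lemma QLap_mixed_pow n A B : exists B',
  QLap Q (mixed_pow n.+2 A B) =
  mixed_pow n (A * (n.+2 * n.+1)%:R * (c1 *m Q *m c1^T) 0 0) B'.
Proof.
rewrite /QLap; under eq_bigr do under eq_bigr do
  rewrite !mderiv_mixed_pow mixed_powZ.
under eq_bigr do rewrite mixed_pow_sum.
rewrite mixed_pow_sum; eexists; congr mixed_pow.
rewrite mxform_sumE mulr_sumr; apply: eq_bigr => i _.
rewrite mulr_sumr; apply: eq_bigr => j _.
by rewrite natrM; ring.
Qed.

Lemma iter_QLap_mixed_pow k n (A B : R) :
  A != 0 -> (c1 *m Q *m c1^T) 0 0 != 0 ->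
  exists (A' B' : R), A' != 0 /\
    iter k (QLap Q) (mixed_pow (n + k.*2) A B) = mixed_pow n A' B'.
Proof.
move=> A_neq0 alpha_neq0; elim: k n A B A_neq0 => [|k IHk] n A B A_neq0.
  by exists A, B; rewrite addn0.
rewrite iterSr doubleS !addnS.
have [B' ->] := QLap_mixed_pow (n + k.*2) A B.
by apply: IHk; rewrite !mulf_neq0 // pnatr_eq0.
Qed.

Lemma mgrad_mixed_pow0 A B :
  mgrad (mixed_pow 0 A B) = map_mx (@mpolyC d R) (A *: c2 + B *: c1).
Proof.
apply/rowP => i; rewrite !mxE /mixed_pow expr0 mul1r expr1.
by rewrite mderivD !mderiv_mulC dL1 dL2 -!rmorphM -rmorphD.
Qed.

End ConstantGradients.

Theorem lemmaD2 (R : realType) (d q : nat) (theta a1 a2 : 'rV[R]_d)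
  (Q : 'M[R]_d) :
  (2 <= d)%N -> (2 <= q)%N -> ~~ odd q ->
  free [:: a1; a2] ->
  sym_posdef Q ->
  mgrad (iter (q %/ 2) (QLap Q)
           (lin_form a1 theta ^+ q * lin_form a2 theta)) != 0.
Proof.
move=> _ _ q_even free_a [_ Q_posdef].
have dL1 := mderiv_lin_form a1 theta; have dL2 := mderiv_lin_form a2 theta.
have a1_neq0 : a1 != 0 by apply: (free_not0 free_a); rewrite inE eqxx.
have alpha_neq0 : (a1 *m Q *m a1^T) 0 0 != 0 by rewrite lt0r_neq0 ?Q_posdef.
have -> : lin_form a1 theta ^+ q * lin_form a2 theta =
    mixed_pow (lin_form a1 theta) (lin_form a2 theta) (0 + (q %/ 2).*2) 1 0.
  by rewrite /mixed_pow add0n -muln2 divnK ?dvdn2 // mul1r mul0r addr0.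
have [A [B [A_neq0 ->]]] :=
  iter_QLap_mixed_pow dL1 dL2 (q %/ 2) 0 0 (oner_neq0 _) alpha_neq0.
rewrite (mgrad_mixed_pow0 dL1 dL2) map_mx_eq0 addrC.
apply: contraNneq A_neq0 => comb0.
by case: (free2_lincomb_eq0 free_a comb0) => _ ->.
Qed.
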